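(* Let $E_3=(S^*,V_1^*,I_1^*,I_2^* )$ be an endemic equilibrium of the model with all components positive. Suppose that for every $(S,V_1,I_1,I_2)$ with positive components other than $E_3$, $$F_1(S^*,I_1^* )\left(2-\tfrac{S^*}{S}-\tfrac{S\,g_1(S,I_1)}{S^*g_1(S^*,I_1^* )}\right)+F_2(S^*,I_2^* )\left(2-\tfrac{S^*}{S}-\tfrac{S\,g_2(S,I_2)}{S^*g_2(S^*,I_2^* )}\right)+rS^*\left(3-\tfrac{S^*}{S}-\tfrac{V_1}{V_1^*}-\tfrac{SV_1^*}{S^*V_1}\right)+\mu S^*\left(2-\tfrac{S^*}{S}-\tfrac{S}{S^*}\right)+I_1\left(S^*g_1(S,I_1)-\alpha_1\right)+I_2\left(S^*g_2(S,I_2)+kV_1^*-\alpha_2\right)<0.$$ Then $E_3$ is globally asymptotically stable.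
   Context: The model is $\dot S=\Lambda-F_1(S,I_1)-F_2(S,I_2)-\lambda S$, $\dot V_1=rS-(\mu+kI_2)V_1$, $\dot I_1=F_1(S,I_1)-\alpha_1I_1$, $\dot I_2=F_2(S,I_2)+kI_2V_1-\alpha_2I_2$ on $\mathbb{R}^4_+$. The constants $\Lambda,\mu,r,k,\gamma_1,\gamma_2>0$ and $v_1,v_2\ge0$; $\lambda=r+\mu$ and $\alpha_i=\gamma_i+v_i+\mu$. For $i=1,2$ the incidence functions satisfy: - (H1) $F_i(S,I_i)=I_if_i(S,I_i)$ with $F_i,f_i\in C^2(\mathbb{R}^2_+,\mathbb{R}_+)$ and $F_i(0,I_i)=F_i(S,0)=0$; - (H2) $\partial f_i/\partial S>0$ and $\partial f_i/\partial I_i\le0$; - (H3) $\lim_{I_i\to0^+}F_i(S,I_i)/I_i$ exists and is positive for $S>0$; - (H4) $f_i(S,I_i)=Sg_i(S,I_i)$ for some function $g_i$. *)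

From Stdlib Require Import Reals.
From Coquelicot Require Import Coquelicot.
Open Scope R_scope.

Definition partial1 (F : R -> R -> R) (x y : R) : R := Derive (fun s => F s y) x.
Definition partial2 (F : R -> R -> R) (x y : R) : R := Derive (fun i => F x i) y.

Definition cont2 (F : R -> R -> R) (x y : R) : Prop :=
  continuous (fun p : R * R => F (fst p) (snd p)) (x, y).

Definition C1_at (F : R -> R -> R) (x y : R) : Prop :=
  cont2 F x y /\ ex_derive (fun s => F s y) x /\ ex_derive (fun i => F x i) y /\
  cont2 (partial1 F) x y /\ cont2 (partial2 F) x y.

Definition C2_on (U : R * R -> Prop) (F : R -> R -> R) : Prop :=
  forall x y, U (x, y) -> C1_at F x y /\ C1_at (partial1 F) x y /\ C1_at (partial2 F) x y.

(** F is C^2 on the closed quadrant R^2_+ (i.e. on an open neighbourhood of it). *)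
Definition C2_quadrant (F : R -> R -> R) : Prop :=
  exists U : R * R -> Prop, open U /\ (forall x y, 0 <= x -> 0 <= y -> U (x, y)) /\ C2_on U F.

Definition incidence_hyp (F f g : R -> R -> R) : Prop :=
  C2_quadrant F /\ C2_quadrant f /\
  (forall S I, 0 <= S -> 0 <= I -> 0 <= F S I /\ 0 <= f S I) /\
  (forall S I, 0 <= S -> 0 <= I -> F S I = I * f S I) /\
  (forall I, 0 <= I -> F 0 I = 0) /\
  (forall S, 0 <= S -> F S 0 = 0) /\
  (forall S I, 0 <= S -> 0 <= I -> 0 < partial1 f S I /\ partial2 f S I <= 0) /\
  (forall S, 0 < S -> exists L, 0 < L /\ filterlim (fun I => F S I / I) (at_right 0) (locally L)) /\
  (forall S I, 0 <= S -> 0 <= I -> f S I = S * g S I).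

Definition is_solution (Lam mu r k gam1 gam2 v1 v2 : R) (F1 F2 : R -> R -> R)
  (S V1 I1 I2 : R -> R) : Prop :=
  (forall t, 0 < t ->
     is_derive S t (Lam - F1 (S t) (I1 t) - F2 (S t) (I2 t) - (r + mu) * S t) /\
     is_derive V1 t (r * S t - (mu + k * I2 t) * V1 t) /\
     is_derive I1 t (F1 (S t) (I1 t) - (gam1 + v1 + mu) * I1 t) /\
     is_derive I2 t (F2 (S t) (I2 t) + k * I2 t * V1 t - (gam2 + v2 + mu) * I2 t)) /\
  filterlim S (at_right 0) (locally (S 0)) /\
  filterlim V1 (at_right 0) (locally (V1 0)) /\
  filterlim I1 (at_right 0) (locally (I1 0)) /\
  filterlim I2 (at_right 0) (locally (I2 0)).

Definition is_equilibrium (Lam mu r k gam1 gam2 v1 v2 : R) (F1 F2 : R -> R -> R)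
  (S V1 I1 I2 : R) : Prop :=
  Lam - F1 S I1 - F2 S I2 - (r + mu) * S = 0 /\
  r * S - (mu + k * I2) * V1 = 0 /\
  F1 S I1 - (gam1 + v1 + mu) * I1 = 0 /\
  F2 S I2 + k * I2 * V1 - (gam2 + v2 + mu) * I2 = 0.

Definition dist4 (a1 a2 a3 a4 b1 b2 b3 b4 : R) : R :=
  sqrt ((a1 - b1)^2 + (a2 - b2)^2 + (a3 - b3)^2 + (a4 - b4)^2).

Definition GAS (Lam mu r k gam1 gam2 v1 v2 : R) (F1 F2 : R -> R -> R)
  (Ss Vs I1s I2s : R) : Prop :=
  (forall eps, 0 < eps -> exists delta, 0 < delta /\
     forall S V1 I1 I2 : R -> R,
       is_solution Lam mu r k gam1 gam2 v1 v2 F1 F2 S V1 I1 I2 ->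
       0 < S 0 -> 0 < V1 0 -> 0 < I1 0 -> 0 < I2 0 ->
       dist4 (S 0) (V1 0) (I1 0) (I2 0) Ss Vs I1s I2s < delta ->
       forall t, 0 <= t -> dist4 (S t) (V1 t) (I1 t) (I2 t) Ss Vs I1s I2s < eps) /\
  (forall S V1 I1 I2 : R -> R,
     is_solution Lam mu r k gam1 gam2 v1 v2 F1 F2 S V1 I1 I2 ->
     0 < S 0 -> 0 < V1 0 -> 0 < I1 0 -> 0 < I2 0 ->
     filterlim S (Rbar_locally p_infty) (locally Ss) /\
     filterlim V1 (Rbar_locally p_infty) (locally Vs) /\
     filterlim I1 (Rbar_locally p_infty) (locally I1s) /\
     filterlim I2 (Rbar_locally p_infty) (locally I2s)).

From Stdlib Require Import Reals Lra Lia Classical ClassicalEpsilon.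
From Coquelicot Require Import Coquelicot.
Open Scope R_scope.

(* Lyapunov's method with the Volterra function [x - xs - xs ln (x / xs)] summed over the four
   compartments.  Along solutions its derivative is bounded by the left side of the assumed
   inequality (the gap is a nonnegative incidence term), so it is nonincreasing and strictly
   decreasing away from E3.  Its sublevel sets are therefore invariant: trajectories stay
   positive and bounded, and E3 is stable.  For attractivity, a limit point of the states at
   times where the Lyapunov function is almost flat is a zero of its derivative, i.e. E3. *)

Lemma ball_Rabs (x e y : R) : ball x e y <-> Rabs (y - x) < e.
Proof. reflexivity. Qed.

Lemma at_right0_lt (c : R) : 0 < c -> at_right 0 (fun eta => eta < c).
Proof. intros Hc. apply filter_le_within, (open_lt c 0 Hc). Qed.

Lemma at_right0_pos : at_right 0 (fun eta => 0 < eta).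
Proof. exists (mkposreal 1 Rlt_0_1). intros y _ Hy. exact Hy. Qed.

Lemma filterlim_Rplus {T : Type} (F : (T -> Prop) -> Prop) {FF : Filter F}
  (f g : T -> R) (a b : R) :
  filterlim f F (locally a) -> filterlim g F (locally b) ->
  filterlim (fun t => f t + g t) F (locally (a + b)).
Proof.
  intros Hf Hg. eapply filterlim_comp_2; [exact Hf | exact Hg | apply (filterlim_plus a b)].
Qed.

Lemma ln_le_sub1 (y : R) : 0 < y -> ln y <= y - 1.
Proof. intros Hy. pose proof (exp_ineq1_le (ln y)). rewrite exp_ln in H; lra. Qed.

(** * The Volterra function *)

Definition volterra (xs x : R) : R := x - xs - xs * ln (x / xs).

Section Volterra.
Variable xs : R.
Hypothesis Hxs : 0 < xs.

Lemma volterra_self : volterra xs xs = 0.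
Proof. unfold volterra. replace (xs / xs) with 1 by (field; lra). rewrite ln_1. ring. Qed.

Lemma sqr_sqrt_sub_le_volterra (x : R) : 0 < x -> (sqrt x - sqrt xs) ^ 2 <= volterra xs x.
Proof.
  intros Hx. unfold volterra.
  set (a := sqrt x). set (b := sqrt xs).
  assert (Ha : 0 < a) by (apply sqrt_lt_R0; lra).
  assert (Hb : 0 < b) by (apply sqrt_lt_R0; lra).
  assert (Haa : a * a = x) by (apply sqrt_sqrt; lra).
  assert (Hbb : b * b = xs) by (apply sqrt_sqrt; lra).
  assert (Hln : ln (x / xs) = 2 * ln (a / b)).
  { replace (x / xs) with (a / b * (a / b)) by (rewrite <- Haa, <- Hbb; field; lra).
    rewrite ln_mult by (apply Rdiv_lt_0_compat; lra). ring. }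
  pose proof (ln_le_sub1 (a / b) ltac:(apply Rdiv_lt_0_compat; lra)) as Hle.
  assert (Hscaled : xs * ln (x / xs) <= 2 * (a * b) - 2 * xs).
  { rewrite Hln, <- Hbb.
    replace (2 * (a * b) - 2 * (b * b)) with (b * b * (2 * (a / b - 1))) by (field; lra).
    apply Rmult_le_compat_l; nra. }
  nra.
Qed.

Lemma volterra_ge0 (x : R) : 0 < x -> 0 <= volterra xs x.
Proof.
  intros Hx. pose proof (sqr_sqrt_sub_le_volterra x Hx).
  pose proof (pow2_ge_0 (sqrt x - sqrt xs)). lra.
Qed.

Lemma volterra_le_lower_bound (x M : R) :
  0 < x -> volterra xs x <= M -> xs * exp (- ((M + xs) / xs)) <= x.
Proof.
  intros Hx HM. destruct (Rle_or_lt (xs * exp (- ((M + xs) / xs))) x) as [|Hlt]; [assumption|].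
  exfalso. unfold volterra in HM.
  assert (Hq : x / xs < exp (- ((M + xs) / xs))).
  { apply (Rmult_lt_reg_l xs); [lra|]. replace (xs * (x / xs)) with x by (field; lra). lra. }
  apply ln_increasing in Hq; [|apply Rdiv_lt_0_compat; lra]. rewrite ln_exp in Hq.
  assert (xs * ln (x / xs) < - (M + xs)).
  { replace (- (M + xs)) with (xs * - ((M + xs) / xs)) by (field; lra).
    apply Rmult_lt_compat_l; lra. }
  lra.
Qed.

Lemma volterra_le_upper_bound (x M : R) :
  0 < x -> volterra xs x <= M -> x <= (sqrt xs + sqrt M) ^ 2.
Proof.
  intros Hx HM. pose proof (sqr_sqrt_sub_le_volterra x Hx) as Hsq.
  assert (HM0 : 0 <= M) by (pose proof (volterra_ge0 x Hx); lra).
  assert (Hsx : sqrt x * sqrt x = x) by (apply sqrt_sqrt; lra).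
  assert (HsM : sqrt M * sqrt M = M) by (apply sqrt_sqrt; lra).
  pose proof (sqrt_pos x). pose proof (sqrt_pos xs). pose proof (sqrt_pos M).
  assert (Hle : sqrt x <= sqrt xs + sqrt M).
  { destruct (Rle_or_lt (sqrt x) (sqrt xs + sqrt M)) as [|Hgt]; [assumption|].
    assert (sqrt M * sqrt M < (sqrt x - sqrt xs) * (sqrt x - sqrt xs))
      by (apply Rmult_le_0_lt_compat; lra).
    simpl in Hsq. lra. }
  rewrite <- Hsx. simpl. rewrite Rmult_1_r. apply Rmult_le_compat; lra.
Qed.

Lemma volterra_sublevel_bounds (x M : R) : 0 < x -> volterra xs x <= M ->
  xs * exp (- ((M + xs) / xs)) <= x <= (sqrt xs + sqrt M) ^ 2.
Proof.
  intros Hx HM.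
  split; [apply volterra_le_lower_bound | apply volterra_le_upper_bound]; assumption.
Qed.

Lemma is_derive_volterra (x : R) : 0 < x -> is_derive (volterra xs) x (1 - xs / x).
Proof.
  intros Hx. unfold volterra. auto_derive.
  - apply Rdiv_lt_0_compat; lra.
  - field. lra.
Qed.

Lemma is_derive_volterra_comp (x : R -> R) (t dx : R) :
  0 < x t -> is_derive x t dx -> is_derive (fun s => volterra xs (x s)) t ((1 - xs / x t) * dx).
Proof.
  intros Hx Hd.
  replace ((1 - xs / x t) * dx) with (scal dx (1 - xs / x t))
    by (unfold scal; simpl; unfold mult; simpl; ring).
  apply (is_derive_comp (V := R_NormedModule) (volterra xs) x t);
    [apply is_derive_volterra, Hx | exact Hd].
Qed.

Lemma continuous_volterra (x : R) : 0 < x -> continuous (volterra xs) x.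
Proof.
  intros Hx. apply (ex_derive_continuous (V := R_NormedModule)).
  eexists. apply is_derive_volterra, Hx.
Qed.

Lemma volterra_small_near (eta : R) : 0 < eta ->
  at_right 0 (fun delta => forall x, Rabs (x - xs) < delta -> volterra xs x < eta).
Proof.
  intros Heta.
  assert (Hnear : locally xs (fun x => volterra xs x < eta)).
  { apply (continuous_volterra xs Hxs (fun v => v < eta)).
    rewrite volterra_self. apply (open_lt eta 0 Heta). }
  destruct Hnear as [eps Heps].
  apply (filter_imp (fun delta => delta < eps)); [|apply at_right0_lt, cond_pos].
  intros delta Hdelta x Hx. apply Heps, ball_Rabs. lra.
Qed.

Lemma near_of_volterra_small (e : R) : 0 < e ->
  at_right 0 (fun eta => forall x, 0 < x -> volterra xs x < eta -> Rabs (x - xs) < e).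
Proof.
  intros He.
  assert (Hsq : continuous (fun u => u * u) (sqrt xs)).
  { apply (ex_derive_continuous (V := R_NormedModule)). auto_derive. exact I. }
  destruct (proj1 (filterlim_locally _ _) Hsq (mkposreal e He)) as [s Hs].
  apply (filter_imp (fun eta => eta < s * s));
    [|apply at_right0_lt, Rmult_lt_0_compat; apply cond_pos].
  intros eta Heta x Hx Hv.
  pose proof (sqr_sqrt_sub_le_volterra x Hx) as Hsqr.
  assert (Hclose : Rabs (sqrt x - sqrt xs) < s).
  { rewrite <- (Rabs_pos_eq s) by (left; apply cond_pos).
    apply Rsqr_lt_abs_0. unfold Rsqr. simpl in Hsqr. lra. }
  specialize (Hs (sqrt x) Hclose). rewrite ball_Rabs in Hs.
  rewrite !sqrt_sqrt in Hs by lra. exact Hs.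
Qed.

End Volterra.

(** * Real analysis *)

Lemma real_induction (P : R -> Prop) :
  P 0 -> at_right 0 P ->
  (forall T, 0 < T -> (forall t, 0 <= t < T -> P t) -> locally T P) ->
  forall t, 0 <= t -> P t.
Proof.
  intros H0 [d Hd] Hstep.
  set (A := fun T => 0 <= T /\ forall t, 0 <= t < T -> P t).
  assert (Ad : A d).
  { split; [left; apply cond_pos|]. intros t [Ht0 Htd].
    destruct (Req_dec t 0) as [->|Hne]; [exact H0|].
    apply Hd; [apply ball_Rabs; rewrite Rminus_0_r, Rabs_pos_eq|]; lra. }
  destruct (classic (exists B, forall T, A T -> T <= B)) as [Hbnd|Hunb].
  - exfalso.
    destruct (completeness A Hbnd (ex_intro _ (pos d) Ad)) as [T0 [Hub Hlub]].
    assert (HT0 : d <= T0) by (apply Hub, Ad).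
    assert (Hbefore : forall t, 0 <= t < T0 -> P t).
    { intros t Ht. apply NNPP. intros HnP.
      enough (T0 <= t) by lra.
      apply Hlub. intros T [_ HT]. destruct (Rle_or_lt T t) as [|Hlt]; [assumption|].
      exfalso. apply HnP, HT. lra. }
    assert (HT0pos : 0 < T0) by (pose proof (cond_pos d); lra).
    destruct (Hstep T0 HT0pos Hbefore) as [e He].
    assert (Hbeyond : A (T0 + e / 2)).
    { pose proof (cond_pos e). split; [lra|]. intros t Ht.
      destruct (Rlt_or_le t T0); [apply Hbefore; lra|].
      apply He, ball_Rabs. rewrite Rabs_pos_eq; lra. }
    pose proof (Hub _ Hbeyond). pose proof (cond_pos e). lra.
  - intros t Ht. apply NNPP. intros HnP. apply Hunb. exists t.
    intros T [_ HT]. destruct (Rle_or_lt T t) as [|Hlt]; [assumption|].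
    exfalso. apply HnP, HT. lra.
Qed.

Lemma le_of_le_before (f : R -> R) (T m : R) :
  0 < T -> continuous f T -> (forall t, 0 <= t < T -> m <= f t) -> m <= f T.
Proof.
  intros HT Hc Hle.
  apply (closed_filterlim_loc (F := at_left T) f (fun y => m <= y)); [| |apply closed_ge].
  - apply (filterlim_filter_le_1 (F := locally T) _ (filter_le_within (F := locally T) _)), Hc.
  - exists (mkposreal T HT). intros t Hball Hlt. rewrite ball_Rabs in Hball. simpl in Hball.
    apply Hle. rewrite Rabs_left in Hball; lra.
Qed.

Lemma positive_near_of_volterra_bounded (x : R -> R) (xs M T : R) :
  0 < xs -> 0 < T -> continuous x T ->
  (forall t, 0 <= t < T -> 0 < x t /\ volterra xs (x t) <= M) ->
  locally T (fun t => 0 < x t).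
Proof.
  intros Hxs HT Hc Hbefore.
  set (m := xs * exp (- ((M + xs) / xs))).
  assert (Hm : 0 < m) by (apply Rmult_lt_0_compat; [lra | apply exp_pos]).
  assert (HxT : m <= x T).
  { apply le_of_le_before; [exact HT | exact Hc |].
    intros t Ht. destruct (Hbefore t Ht). apply volterra_le_lower_bound; assumption. }
  apply (Hc (fun y => 0 < y)), open_gt. lra.
Qed.

Lemma antitone_of_derive_nonpos (f df : R -> R) (T : R) :
  (forall t, 0 < t < T -> is_derive f t (df t) /\ df t <= 0) ->
  filterlim f (at_right 0) (locally (f 0)) ->
  forall s t, 0 <= s <= t -> t < T -> f t <= f s.
Proof.
  intros Hd Hright.
  assert (Hpos : forall s t, 0 < s <= t -> t < T -> f t <= f s).
  { intros s t Hst HtT.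
    destruct (MVT_gen f s t df) as [c [Hc Hmvt]];
      rewrite ?Rmin_left, ?Rmax_right in * by lra.
    - intros x Hx. apply Hd. lra.
    - intros x Hx. apply continuity_pt_filterlim, (ex_derive_continuous (V := R_NormedModule)).
      eexists. apply Hd. lra.
    - assert (df c <= 0) by (apply Hd; lra). nra. }
  intros s t Hst HtT.
  destruct (Req_dec s 0) as [->|Hs]; [|apply Hpos; lra].
  destruct (Req_dec t 0) as [->|Ht]; [lra|].
  apply (closed_filterlim_loc f (fun y => f t <= y) (f 0) Hright); [|apply closed_ge].
  exists (mkposreal t ltac:(lra)). intros y Hy Hy0. rewrite ball_Rabs in Hy. simpl in Hy.
  rewrite Rminus_0_r, Rabs_pos_eq in Hy by lra. apply Hpos; lra.
Qed.

Lemma derive_vanishing_seq (f df : R -> R) :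
  (forall t, 0 < t -> is_derive f t (df t)) ->
  (forall s t, 0 <= s <= t -> f t <= f s) ->
  (forall t, 0 <= t -> 0 <= f t) ->
  exists s : nat -> R, (forall n, 0 <= s n) /\ is_lim_seq (fun n => df (s n)) 0.
Proof.
  intros Hd Hanti Hnonneg.
  set (u := fun n => f (INR n + 1)).
  assert (HI := pos_INR).
  assert (Hdecr : forall n, u (S n) <= u n).
  { intros n. unfold u. rewrite S_INR. apply Hanti. specialize (HI n). lra. }
  assert (Hbelow : forall n, 0 <= u n) by (intros n; apply Hnonneg; specialize (HI n); lra).
  destruct (ex_finite_lim_seq_decr u 0 Hdecr Hbelow) as [l Hl].
  assert (Hdiff : is_lim_seq (fun n => u (S n) - u n) 0).
  { replace (Finite 0) with (Rbar_minus l l) by (simpl; f_equal; ring).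
    apply is_lim_seq_minus'; [apply (is_lim_seq_incr_1 u) |]; exact Hl. }
  assert (Hmvt : forall n, exists s, 0 <= s /\ u (S n) - u n = df s).
  { intros n. specialize (HI n).
    destruct (MVT_gen f (INR n + 1) (INR n + 2) df) as [s [Hs Hmvt]];
      rewrite ?Rmin_left, ?Rmax_right in * by lra.
    - intros x Hx. apply Hd. lra.
    - intros x Hx. apply continuity_pt_filterlim, (ex_derive_continuous (V := R_NormedModule)).
      eexists. apply Hd. lra.
    - exists s. split; [lra|]. unfold u. rewrite S_INR.
      replace (INR n + 1 + 1) with (INR n + 2) by ring. rewrite Hmvt. ring. }
  destruct (choice _ Hmvt) as [s Hs]. exists s. split; [apply Hs|].
  apply (is_lim_seq_ext _ _ _ (fun n => proj2 (Hs n)) Hdiff).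
Qed.

Definition increasing_index (phi : nat -> nat) : Prop := forall n, (phi n < phi (S n))%nat.

Lemma increasing_index_comp (phi psi : nat -> nat) :
  increasing_index phi -> increasing_index psi -> increasing_index (fun n => phi (psi n)).
Proof.
  intros Hphi Hpsi n.
  assert (Hmono : forall m p, (m < p)%nat -> (phi m < phi p)%nat).
  { intros m p Hmp. induction Hmp; [apply Hphi|]. specialize (Hphi m0). lia. }
  apply Hmono, Hpsi.
Qed.

Lemma is_lim_seq_subseq_index (u : nat -> R) (l : R) (phi : nat -> nat) :
  increasing_index phi -> is_lim_seq u l -> is_lim_seq (fun n => u (phi n)) l.
Proof. intros Hphi. apply is_lim_seq_subseq, eventually_subseq, Hphi. Qed.

Lemma bolzano_weierstrass_subseq (u : nat -> R) (a b : R) :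
  (forall n, a <= u n <= b) ->
  exists phi, increasing_index phi /\
    exists l, a <= l <= b /\ is_lim_seq (fun n => u (phi n)) l.
Proof.
  intros Hab.
  destruct (Bolzano_Weierstrass u (fun c => a <= c <= b) (compact_P3 a b) Hab) as [l Hl].
  assert (Hnear : forall N, exists p, (N <= p)%nat /\ Rabs (u p - l) < / INR (S N)).
  { intros N. assert (Hpos : 0 < / INR (S N)) by (apply Rinv_0_lt_compat, lt_0_INR; lia).
    apply (Hl (fun y => Rabs (y - l) < / INR (S N)) N).
    exists (mkposreal _ Hpos). intros y Hy. exact Hy. }
  destruct (choice _ Hnear) as [c Hc].
  set (phi := fix phi n := match n with O => c O | S m => c (S (phi m)) end).
  assert (Hinc : increasing_index phi).
  { intros n. simpl. destruct (Hc (S (phi n))). lia. }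
  assert (Hge : forall n, (n <= phi n)%nat).
  { induction n; [lia|]. specialize (Hinc n). lia. }
  assert (Hclose : forall n, Rabs (u (phi n) - l) < / INR (S n)).
  { intros [|n]; [apply Hc|].
    change (Rabs (u (c (S (phi n))) - l) < / INR (S (S n))).
    eapply Rlt_le_trans; [apply Hc|].
    apply Rinv_le_contravar; [apply lt_0_INR; lia|]. apply le_INR. specialize (Hge n). lia. }
  assert (Hinv : is_lim_seq (fun n => / INR (S n)) 0).
  { apply (is_lim_seq_inv (fun n => INR (S n)) p_infty); [|discriminate].
    apply (is_lim_seq_incr_1 INR), is_lim_seq_INR. }
  assert (Hlim : is_lim_seq (fun n => u (phi n)) l).
  { apply is_lim_seq_spec. intros eps. apply is_lim_seq_spec in Hinv.
    specialize (Hinv eps). revert Hinv; apply filter_imp. intros n Hn.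
    change (Rabs (/ INR (S n) - 0) < eps) in Hn. rewrite Rminus_0_r, Rabs_pos_eq in Hn
      by (left; apply Rinv_0_lt_compat, lt_0_INR; lia).
    pose proof (Hclose n). lra. }
  exists phi. split; [exact Hinc|]. exists l. split; [|exact Hlim].
  split.
  - apply (is_lim_seq_le (fun _ => a) (fun n => u (phi n)) a l); auto using is_lim_seq_const.
    intros n. apply Hab.
  - apply (is_lim_seq_le (fun n => u (phi n)) (fun _ => b) l b); auto using is_lim_seq_const.
    intros n. apply Hab.
Qed.

Lemma bolzano_weierstrass_subseq4 (u1 u2 u3 u4 : nat -> R) (a1 b1 a2 b2 a3 b3 a4 b4 : R) :
  (forall n, a1 <= u1 n <= b1) -> (forall n, a2 <= u2 n <= b2) ->
  (forall n, a3 <= u3 n <= b3) -> (forall n, a4 <= u4 n <= b4) ->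
  exists phi, increasing_index phi /\ exists l1 l2 l3 l4,
    (a1 <= l1 <= b1 /\ a2 <= l2 <= b2 /\ a3 <= l3 <= b3 /\ a4 <= l4 <= b4) /\
    is_lim_seq (fun n => u1 (phi n)) l1 /\ is_lim_seq (fun n => u2 (phi n)) l2 /\
    is_lim_seq (fun n => u3 (phi n)) l3 /\ is_lim_seq (fun n => u4 (phi n)) l4.
Proof.
  intros H1 H2 H3 H4.
  destruct (bolzano_weierstrass_subseq u1 a1 b1 H1) as [p1 [Hp1 [l1 [B1 L1]]]].
  destruct (bolzano_weierstrass_subseq (fun n => u2 (p1 n)) a2 b2 (fun n => H2 _))
    as [p2 [Hp2 [l2 [B2 L2]]]].
  destruct (bolzano_weierstrass_subseq (fun n => u3 (p1 (p2 n))) a3 b3 (fun n => H3 _))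
    as [p3 [Hp3 [l3 [B3 L3]]]].
  destruct (bolzano_weierstrass_subseq (fun n => u4 (p1 (p2 (p3 n)))) a4 b4 (fun n => H4 _))
    as [p4 [Hp4 [l4 [B4 L4]]]].
  assert (Hp34 := increasing_index_comp p3 p4 Hp3 Hp4).
  assert (Hp234 := increasing_index_comp p2 _ Hp2 Hp34).
  exists (fun n => p1 (p2 (p3 (p4 n)))).
  split; [exact (increasing_index_comp p1 _ Hp1 Hp234)|].
  exists l1, l2, l3, l4. split; [tauto|]. repeat split.
  - exact (is_lim_seq_subseq_index _ _ _ Hp234 L1).
  - exact (is_lim_seq_subseq_index _ _ _ Hp34 L2).
  - exact (is_lim_seq_subseq_index _ _ _ Hp4 L3).
  - exact L4.
Qed.

Lemma Rabs_sub_le_dist4 (a1 a2 a3 a4 b1 b2 b3 b4 : R) :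
  let d := dist4 a1 a2 a3 a4 b1 b2 b3 b4 in
  Rabs (a1 - b1) <= d /\ Rabs (a2 - b2) <= d /\ Rabs (a3 - b3) <= d /\ Rabs (a4 - b4) <= d.
Proof.
  assert (Hsqrt : forall x s, x ^ 2 <= s -> Rabs x <= sqrt s).
  { intros x s Hs. rewrite <- sqrt_Rsqr_abs. apply sqrt_le_1_alt. unfold Rsqr. simpl in Hs. lra. }
  pose proof (pow2_ge_0 (a1 - b1)); pose proof (pow2_ge_0 (a2 - b2)).
  pose proof (pow2_ge_0 (a3 - b3)); pose proof (pow2_ge_0 (a4 - b4)).
  unfold dist4. repeat split; apply Hsqrt; lra.
Qed.

Lemma dist4_lt_of_Rabs_sub_lt (a1 a2 a3 a4 b1 b2 b3 b4 e : R) : 0 < e ->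
  Rabs (a1 - b1) < e / 2 -> Rabs (a2 - b2) < e / 2 ->
  Rabs (a3 - b3) < e / 2 -> Rabs (a4 - b4) < e / 2 ->
  dist4 a1 a2 a3 a4 b1 b2 b3 b4 < e.
Proof.
  intros He H1 H2 H3 H4. unfold dist4.
  assert (Hsq : forall x, Rabs x < e / 2 -> x ^ 2 < e ^ 2 / 4).
  { intros x Hx. rewrite <- (pow2_abs x). pose proof (Rabs_pos x). nra. }
  pose proof (Hsq _ H1); pose proof (Hsq _ H2); pose proof (Hsq _ H3); pose proof (Hsq _ H4).
  rewrite <- (sqrt_pow2 e) by lra. apply sqrt_lt_1_alt. split; [|lra].
  repeat apply Rplus_le_le_0_compat; apply pow2_ge_0.
Qed.

(** * The model *)

Lemma incidence_factor (F f g : R -> R -> R) : incidence_hyp F f g ->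
  forall S I, 0 <= S -> 0 <= I -> F S I = I * (S * g S I).
Proof.
  intros (_ & _ & _ & HF & _ & _ & _ & _ & Hg) S I HS HI. rewrite HF, Hg; auto.
Qed.

Lemma incidence_g_nonneg (F f g : R -> R -> R) : incidence_hyp F f g ->
  forall S I, 0 < S -> 0 <= I -> 0 <= g S I.
Proof.
  intros (_ & _ & Hnn & _ & _ & _ & _ & _ & Hg) S I HS HI.
  destruct (Hnn S I ltac:(lra) HI) as [_ Hf]. rewrite Hg in Hf by lra.
  destruct (Rle_or_lt 0 (g S I)); [assumption | nra].
Qed.

Lemma incidence_cont2 (F f g : R -> R -> R) : incidence_hyp F f g ->
  forall S I, 0 <= S -> 0 <= I -> cont2 F S I.
Proof.
  intros [[U (_ & HU & HC)] _] S I HS HI. apply (HC S I (HU S I HS HI)).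
Qed.

(* The right side is the paper's regrouping of the Lyapunov derivative, after eliminating
   [Lam], [r], [F1s] and [F2s] with the equilibrium equations. *)
Lemma lyap_rate_identity (Lam mu r k al1 al2 Ss Vs I1s I2s F1s F2s S V I1 I2 a b : R) :
  Ss <> 0 -> Vs <> 0 -> I1s <> 0 -> I2s <> 0 -> S <> 0 -> V <> 0 -> I1 <> 0 -> I2 <> 0 ->
  Lam - F1s - F2s - (r + mu) * Ss = 0 ->
  r * Ss - (mu + k * I2s) * Vs = 0 ->
  F1s - al1 * I1s = 0 ->
  F2s + k * I2s * Vs - al2 * I2s = 0 ->
  (1 - Ss / S) * (Lam - I1 * (S * a) - I2 * (S * b) - (r + mu) * S)
  + (1 - Vs / V) * (r * S - (mu + k * I2) * V)
  + (1 - I1s / I1) * (I1 * (S * a) - al1 * I1)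
  + (1 - I2s / I2) * (I2 * (S * b) + k * I2 * V - al2 * I2)
  = F1s * (2 - Ss / S) - I1s * (S * a) + F2s * (2 - Ss / S) - I2s * (S * b)
    + r * Ss * (3 - Ss / S - V / Vs - S * Vs / (Ss * V))
    + mu * Ss * (2 - Ss / S - S / Ss)
    + I1 * (Ss * a - al1) + I2 * (Ss * b + k * Vs - al2).
Proof.
  intros.
  assert (HLam : Lam = F1s + F2s + (r + mu) * Ss) by lra.
  assert (HF1 : F1s = al1 * I1s) by lra.
  assert (HF2 : F2s = al2 * I2s - k * I2s * Vs) by lra.
  assert (Hr : r = (mu + k * I2s) * Vs / Ss).
  { apply (Rmult_eq_reg_r Ss); [|assumption]. field_simplify; [lra | assumption]. }
  subst Lam F1s F2s r. field. repeat split; assumption.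
Qed.

(* If [a0 = 0] then [Fs = 0], and the left side is [0] because [x / 0 = 0]. *)
Lemma incidence_ratio_le (Fs Is Ss S a a0 : R) :
  0 < Is -> 0 < Ss -> 0 < S -> 0 <= a -> Fs = Is * (Ss * a0) ->
  Fs * (S * a / (Ss * a0)) <= Is * (S * a).
Proof.
  intros HIs HSs HS Ha ->. destruct (Req_dec a0 0) as [->|Ha0].
  - rewrite !Rmult_0_r, Rmult_0_l. apply Rmult_le_pos; [lra | nra].
  - right. field. split; lra.
Qed.

Lemma is_lim_seq_cont2 (F : R -> R -> R) (a c : nat -> R) (x y : R) : cont2 F x y ->
  is_lim_seq a x -> is_lim_seq c y -> is_lim_seq (fun n => F (a n) (c n)) (F x y).
Proof.
  intros HF Ha Hc. apply (filterlim_comp _ _ _ (fun n => (a n, c n)) (fun p => F (fst p) (snd p))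
    eventually (locally (x, y))); [|exact HF].
  apply filterlim_locally. intros eps.
  generalize (filter_and _ _ (proj1 (filterlim_locally a x) Ha eps)
    (proj1 (filterlim_locally c y) Hc eps)).
  apply filter_imp. intros n Hn. exact Hn.
Qed.

Ltac solve_is_lim_seq :=
  repeat match goal with
  | |- is_lim_seq (fun n => ?c) _ => apply is_lim_seq_const
  | |- is_lim_seq (fun n => _ + _) _ => apply is_lim_seq_plus'
  | |- is_lim_seq (fun n => _ - _) _ => apply is_lim_seq_minus'
  | |- is_lim_seq (fun n => _ * _) _ => apply is_lim_seq_mult'
  | |- is_lim_seq (fun n => _ / _) _ => apply is_lim_seq_div'; [| |apply Rgt_not_eq]
  | |- is_lim_seq (fun n => volterra _ _) _ =>
      apply is_lim_seq_continuous; [apply continuity_pt_filterlim, continuous_volterra|]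
  | |- is_lim_seq (fun n => ?F _ _) _ => apply is_lim_seq_cont2; [eapply incidence_cont2| |]
  | |- is_lim_seq _ _ => eassumption
  end.

Section Model.

Variables (Lam mu r k gam1 gam2 v1 v2 : R) (F1 F2 f1 f2 g1 g2 : R -> R -> R)
  (Ss Vs I1s I2s : R).
Hypotheses (HF1 : incidence_hyp F1 f1 g1) (HF2 : incidence_hyp F2 f2 g2)
  (HSs : 0 < Ss) (HVs : 0 < Vs) (HI1s : 0 < I1s) (HI2s : 0 < I2s)
  (Heq : is_equilibrium Lam mu r k gam1 gam2 v1 v2 F1 F2 Ss Vs I1s I2s).

Definition lyap (S V I1 I2 : R) : R :=
  volterra Ss S + volterra Vs V + volterra I1s I1 + volterra I2s I2.

Definition lyap_rate (S V I1 I2 : R) : R :=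
  (1 - Ss / S) * (Lam - F1 S I1 - F2 S I2 - (r + mu) * S)
  + (1 - Vs / V) * (r * S - (mu + k * I2) * V)
  + (1 - I1s / I1) * (F1 S I1 - (gam1 + v1 + mu) * I1)
  + (1 - I2s / I2) * (F2 S I2 + k * I2 * V - (gam2 + v2 + mu) * I2).

Definition lyap_rate_bound (S V I1 I2 : R) : R :=
  F1 Ss I1s * (2 - Ss / S - S * g1 S I1 / (Ss * g1 Ss I1s))
  + F2 Ss I2s * (2 - Ss / S - S * g2 S I2 / (Ss * g2 Ss I2s))
  + r * Ss * (3 - Ss / S - V / Vs - S * Vs / (Ss * V))
  + mu * Ss * (2 - Ss / S - S / Ss)
  + I1 * (Ss * g1 S I1 - (gam1 + v1 + mu))
  + I2 * (Ss * g2 S I2 + k * Vs - (gam2 + v2 + mu)).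

Hypothesis Hdecay : forall S V I1 I2 : R,
  0 < S -> 0 < V -> 0 < I1 -> 0 < I2 ->
  (S, V, I1, I2) <> (Ss, Vs, I1s, I2s) -> lyap_rate_bound S V I1 I2 < 0.

Lemma lyap_rate_le_bound (S V I1 I2 : R) : 0 < S -> 0 < V -> 0 < I1 -> 0 < I2 ->
  lyap_rate S V I1 I2 <= lyap_rate_bound S V I1 I2.
Proof.
  intros HS HV HI1 HI2. destruct Heq as (E1 & E2 & E3 & E4).
  unfold lyap_rate, lyap_rate_bound.
  rewrite (incidence_factor _ _ _ HF1 S I1), (incidence_factor _ _ _ HF2 S I2) by lra.
  rewrite (lyap_rate_identity Lam mu r k _ _ Ss Vs I1s I2s (F1 Ss I1s) (F2 Ss I2s))
    by (assumption || lra).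
  pose proof (incidence_ratio_le (F1 Ss I1s) I1s Ss S (g1 S I1) (g1 Ss I1s) HI1s HSs HS
    (incidence_g_nonneg _ _ _ HF1 S I1 HS ltac:(lra))
    (incidence_factor _ _ _ HF1 Ss I1s ltac:(lra) ltac:(lra))).
  pose proof (incidence_ratio_le (F2 Ss I2s) I2s Ss S (g2 S I2) (g2 Ss I2s) HI2s HSs HS
    (incidence_g_nonneg _ _ _ HF2 S I2 HS ltac:(lra))
    (incidence_factor _ _ _ HF2 Ss I2s ltac:(lra) ltac:(lra))).
  lra.
Qed.

Lemma lyap_rate_at_equilibrium : lyap_rate Ss Vs I1s I2s = 0.
Proof.
  destruct Heq as (E1 & E2 & E3 & E4). unfold lyap_rate.
  rewrite E1, E2, E3, E4. ring.
Qed.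

Lemma lyap_rate_nonpos (S V I1 I2 : R) : 0 < S -> 0 < V -> 0 < I1 -> 0 < I2 ->
  lyap_rate S V I1 I2 <= 0.
Proof.
  intros HS HV HI1 HI2.
  destruct (classic ((S, V, I1, I2) = (Ss, Vs, I1s, I2s))) as [He|Hne].
  - injection He as -> -> -> ->. rewrite lyap_rate_at_equilibrium. lra.
  - pose proof (lyap_rate_le_bound S V I1 I2 HS HV HI1 HI2).
    pose proof (Hdecay S V I1 I2 HS HV HI1 HI2 Hne). lra.
Qed.

Lemma lyap_rate_eq0 (S V I1 I2 : R) : 0 < S -> 0 < V -> 0 < I1 -> 0 < I2 ->
  lyap_rate S V I1 I2 = 0 -> (S, V, I1, I2) = (Ss, Vs, I1s, I2s).
Proof.
  intros HS HV HI1 HI2 H0. apply NNPP. intros Hne.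
  pose proof (lyap_rate_le_bound S V I1 I2 HS HV HI1 HI2).
  pose proof (Hdecay S V I1 I2 HS HV HI1 HI2 Hne). lra.
Qed.

Lemma lyap_at_equilibrium : lyap Ss Vs I1s I2s = 0.
Proof. unfold lyap. rewrite !volterra_self by assumption. ring. Qed.

Lemma volterra_le_lyap (S V I1 I2 : R) : 0 < S -> 0 < V -> 0 < I1 -> 0 < I2 ->
  let L := lyap S V I1 I2 in
  volterra Ss S <= L /\ volterra Vs V <= L /\ volterra I1s I1 <= L /\ volterra I2s I2 <= L.
Proof.
  intros HS HV HI1 HI2. unfold lyap.
  pose proof (volterra_ge0 Ss HSs S HS); pose proof (volterra_ge0 Vs HVs V HV).
  pose proof (volterra_ge0 I1s HI1s I1 HI1); pose proof (volterra_ge0 I2s HI2s I2 HI2).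
  repeat split; lra.
Qed.

Lemma is_lim_seq_lyap_rate (a b c d : nat -> R) (pa pb pc pd : R) :
  0 < pa -> 0 < pb -> 0 < pc -> 0 < pd ->
  is_lim_seq a pa -> is_lim_seq b pb -> is_lim_seq c pc -> is_lim_seq d pd ->
  is_lim_seq (fun n => lyap_rate (a n) (b n) (c n) (d n)) (lyap_rate pa pb pc pd).
Proof. intros. unfold lyap_rate. solve_is_lim_seq; eauto; lra. Qed.

Lemma is_lim_seq_lyap (a b c d : nat -> R) (pa pb pc pd : R) :
  0 < pa -> 0 < pb -> 0 < pc -> 0 < pd ->
  is_lim_seq a pa -> is_lim_seq b pb -> is_lim_seq c pc -> is_lim_seq d pd ->
  is_lim_seq (fun n => lyap (a n) (b n) (c n) (d n)) (lyap pa pb pc pd).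
Proof. intros. unfold lyap. solve_is_lim_seq; assumption. Qed.

Lemma lyap_nonneg (S V I1 I2 : R) : 0 < S -> 0 < V -> 0 < I1 -> 0 < I2 ->
  0 <= lyap S V I1 I2.
Proof.
  intros HS HV HI1 HI2. pose proof (volterra_ge0 Ss HSs S HS).
  destruct (volterra_le_lyap S V I1 I2 HS HV HI1 HI2) as (B & _). lra.
Qed.

Lemma lyap_small_near (eta : R) : 0 < eta ->
  at_right 0 (fun delta => 0 < delta /\ forall S V I1 I2,
    Rabs (S - Ss) < delta -> Rabs (V - Vs) < delta ->
    Rabs (I1 - I1s) < delta -> Rabs (I2 - I2s) < delta -> lyap S V I1 I2 < eta).
Proof.
  intros Heta. assert (Heta4 : 0 < eta / 4) by lra.
  eapply filter_imp; cycle 1.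
  { apply filter_and; [apply at_right0_pos|].
    apply filter_and; [apply (volterra_small_near Ss HSs _ Heta4)|].
    apply filter_and; [apply (volterra_small_near Vs HVs _ Heta4)|].
    apply filter_and; [apply (volterra_small_near I1s HI1s _ Heta4)|].
    apply (volterra_small_near I2s HI2s _ Heta4). }
  intros delta (Hdelta & NS & NV & NI1 & NI2). split; [exact Hdelta|].
  intros S V I1 I2 CS CV CI1 CI2. unfold lyap.
  specialize (NS S CS); specialize (NV V CV); specialize (NI1 I1 CI1); specialize (NI2 I2 CI2).
  lra.
Qed.

Lemma near_of_lyap_small (e : R) : 0 < e ->
  at_right 0 (fun eta => 0 < eta /\ forall S V I1 I2,
    0 < S -> 0 < V -> 0 < I1 -> 0 < I2 -> lyap S V I1 I2 < eta ->
    Rabs (S - Ss) < e /\ Rabs (V - Vs) < e /\ Rabs (I1 - I1s) < e /\ Rabs (I2 - I2s) < e).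
Proof.
  intros He.
  eapply filter_imp; cycle 1.
  { apply filter_and; [apply at_right0_pos|].
    apply filter_and; [apply (near_of_volterra_small Ss HSs _ He)|].
    apply filter_and; [apply (near_of_volterra_small Vs HVs _ He)|].
    apply filter_and; [apply (near_of_volterra_small I1s HI1s _ He)|].
    apply (near_of_volterra_small I2s HI2s _ He). }
  intros eta (Heta & NS & NV & NI1 & NI2). split; [exact Heta|].
  intros S V I1 I2 HS HV HI1 HI2 HL.
  destruct (volterra_le_lyap S V I1 I2 HS HV HI1 HI2) as (BS & BV & BI1 & BI2).
  repeat split; [apply NS | apply NV | apply NI1 | apply NI2]; (assumption || lra).
Qed.

Section Solution.

Variables (S V I1 I2 : R -> R).
Hypotheses (Hsol : is_solution Lam mu r k gam1 gam2 v1 v2 F1 F2 S V I1 I2)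
  (HS0 : 0 < S 0) (HV0 : 0 < V 0) (HI10 : 0 < I1 0) (HI20 : 0 < I2 0).

Definition positive_at (t : R) : Prop := 0 < S t /\ 0 < V t /\ 0 < I1 t /\ 0 < I2 t.
Definition lyap_sol (t : R) : R := lyap (S t) (V t) (I1 t) (I2 t).
Definition lyap_rate_sol (t : R) : R := lyap_rate (S t) (V t) (I1 t) (I2 t).

Lemma continuous_sol (t : R) : 0 < t ->
  continuous S t /\ continuous V t /\ continuous I1 t /\ continuous I2 t.
Proof.
  intros Ht. destruct Hsol as [Hd _]. destruct (Hd t Ht) as (dS & dV & dI1 & dI2).
  repeat split; apply (ex_derive_continuous (V := R_NormedModule)); eexists; eassumption.
Qed.

Lemma is_derive_lyap_sol (t : R) :
  0 < t -> positive_at t -> is_derive lyap_sol t (lyap_rate_sol t).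
Proof.
  intros Ht (pS & pV & pI1 & pI2). destruct Hsol as [Hd _].
  destruct (Hd t Ht) as (dS & dV & dI1 & dI2).
  unfold lyap_sol, lyap, lyap_rate_sol, lyap_rate.
  repeat apply (is_derive_plus (V := R_NormedModule));
    apply is_derive_volterra_comp; assumption.
Qed.

Lemma lyap_sol_right_continuous : filterlim lyap_sol (at_right 0) (locally (lyap_sol 0)).
Proof.
  destruct Hsol as (_ & RS & RV & RI1 & RI2). unfold lyap_sol, lyap.
  assert (Hcomp : forall (x : R -> R) xs, 0 < xs -> 0 < x 0 ->
    filterlim x (at_right 0) (locally (x 0)) ->
    filterlim (fun t => volterra xs (x t)) (at_right 0) (locally (volterra xs (x 0)))).
  { intros x xs Hxs Hx0 Hx.
    exact (filterlim_comp _ _ _ _ _ _ _ _ Hx (continuous_volterra xs Hxs _ Hx0)). }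
  apply (filterlim_Rplus (at_right 0));
    [apply (filterlim_Rplus (at_right 0)); [apply (filterlim_Rplus (at_right 0))|]|];
    apply Hcomp; assumption.
Qed.

Lemma lyap_sol_antitone_before (T : R) : (forall t, 0 <= t < T -> positive_at t) ->
  forall s t, 0 <= s <= t -> t < T -> lyap_sol t <= lyap_sol s.
Proof.
  intros Hpos. apply (antitone_of_derive_nonpos lyap_sol lyap_rate_sol T);
    [|exact lyap_sol_right_continuous].
  intros t Ht. destruct (Hpos t ltac:(lra)) as (pS & pV & pI1 & pI2). split.
  - apply is_derive_lyap_sol; [lra | repeat split; assumption].
  - apply lyap_rate_nonpos; assumption.
Qed.

Lemma initial_sublevel_of_positive (t : R) :
  positive_at t -> lyap_sol t <= lyap_sol 0 -> let L0 := lyap_sol 0 in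
  (0 < S t /\ volterra Ss (S t) <= L0) /\ (0 < V t /\ volterra Vs (V t) <= L0) /\
  (0 < I1 t /\ volterra I1s (I1 t) <= L0) /\ (0 < I2 t /\ volterra I2s (I2 t) <= L0).
Proof.
  intros (pS & pV & pI1 & pI2) HL. unfold lyap_sol in *.
  destruct (volterra_le_lyap _ _ _ _ pS pV pI1 pI2) as (BS & BV & BI1 & BI2).
  repeat split; (assumption || lra).
Qed.

(* Before leaving the open orthant a trajectory would have to make [lyap_sol] blow up,
   but [lyap_sol] does not increase while the trajectory is inside. *)
Lemma positive_forever : forall t, 0 <= t -> positive_at t.
Proof.
  destruct Hsol as (_ & RS & RV & RI1 & RI2).
  apply real_induction.
  - repeat split; assumption.
  - assert (Hright : forall x : R -> R, 0 < x 0 -> filterlim x (at_right 0) (locally (x 0)) ->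
      at_right 0 (fun t => 0 < x t)).
    { intros x Hx0 Hx. apply Hx, open_gt, Hx0. }
    repeat apply filter_and; apply Hright; assumption.
  - intros T HT Hbefore.
    assert (Hlyap : forall t, 0 <= t < T -> lyap_sol t <= lyap_sol 0).
    { intros t Ht. apply (lyap_sol_antitone_before T Hbefore); lra. }
    destruct (continuous_sol T HT) as (CS & CV & CI1 & CI2).
    pose proof (fun t Ht => initial_sublevel_of_positive t (Hbefore t Ht) (Hlyap t Ht))
      as Hbound.
    unfold positive_at. repeat apply filter_and;
      (eapply positive_near_of_volterra_bounded; [| exact HT | eassumption |
        intros t Ht; destruct (Hbound t Ht) as (? & ? & ? & ?); eassumption]); assumption.
Qed.

Lemma lyap_sol_antitone (s t : R) : 0 <= s <= t -> lyap_sol t <= lyap_sol s.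
Proof.
  intros Hst. apply (lyap_sol_antitone_before (t + 1)); [|lra|lra].
  intros u Hu. apply positive_forever. lra.
Qed.

Lemma trajectory_in_initial_sublevel (t : R) : 0 <= t -> let L0 := lyap_sol 0 in
  (0 < S t /\ volterra Ss (S t) <= L0) /\ (0 < V t /\ volterra Vs (V t) <= L0) /\
  (0 < I1 t /\ volterra I1s (I1 t) <= L0) /\ (0 < I2 t /\ volterra I2s (I2 t) <= L0).
Proof.
  intros Ht. apply initial_sublevel_of_positive; [apply positive_forever, Ht |].
  apply lyap_sol_antitone. lra.
Qed.

Lemma lyap_rate_sol_vanishing_seq :
  exists s : nat -> R, (forall n, 0 <= s n) /\ is_lim_seq (fun n => lyap_rate_sol (s n)) 0.
Proof.
  apply (derive_vanishing_seq lyap_sol).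
  - intros t Ht. apply is_derive_lyap_sol; [|apply positive_forever]; lra.
  - exact lyap_sol_antitone.
  - intros t Ht. destruct (positive_forever t Ht) as (pS & pV & pI1 & pI2).
    apply lyap_nonneg; assumption.
Qed.

(* The LaSalle step: a limit point of the samples where [lyap_sol] is almost flat is a zero
   of [lyap_rate], hence the equilibrium, where [lyap] vanishes. *)
Lemma lyap_sol_vanishing_seq :
  exists s : nat -> R, (forall n, 0 <= s n) /\ is_lim_seq (fun n => lyap_sol (s n)) 0.
Proof.
  destruct lyap_rate_sol_vanishing_seq as [s [Hs0 Hrate]].
  set (M := lyap_sol 0).
  assert (Hbound := fun n => trajectory_in_initial_sublevel (s n) (Hs0 n)).
  destruct (bolzano_weierstrass_subseq4 (fun n => S (s n)) (fun n => V (s n))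
    (fun n => I1 (s n)) (fun n => I2 (s n)))
    with (a1 := Ss * exp (- ((M + Ss) / Ss))) (b1 := (sqrt Ss + sqrt M) ^ 2)
         (a2 := Vs * exp (- ((M + Vs) / Vs))) (b2 := (sqrt Vs + sqrt M) ^ 2)
         (a3 := I1s * exp (- ((M + I1s) / I1s))) (b3 := (sqrt I1s + sqrt M) ^ 2)
         (a4 := I2s * exp (- ((M + I2s) / I2s))) (b4 := (sqrt I2s + sqrt M) ^ 2)
    as [phi [Hphi (pS & pV & pI1 & pI2 & Hp & LS & LV & LI1 & LI2)]];
    try (intros n; destruct (Hbound n) as (BS & BV & BI1 & BI2);
         apply volterra_sublevel_bounds; tauto).
  assert (Hlow : forall xs, 0 < xs -> 0 < xs * exp (- ((M + xs) / xs)))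
    by (intros; apply Rmult_lt_0_compat; [assumption | apply exp_pos]).
  assert (qS : 0 < pS) by (pose proof (Hlow Ss HSs); lra).
  assert (qV : 0 < pV) by (pose proof (Hlow Vs HVs); lra).
  assert (qI1 : 0 < pI1) by (pose proof (Hlow I1s HI1s); lra).
  assert (qI2 : 0 < pI2) by (pose proof (Hlow I2s HI2s); lra).
  assert (Hrate0 : lyap_rate pS pV pI1 pI2 = 0).
  { pose proof (is_lim_seq_subseq_index _ 0 _ Hphi Hrate) as H0.
    pose proof (is_lim_seq_lyap_rate _ _ _ _ _ _ _ _ qS qV qI1 qI2 LS LV LI1 LI2) as Hp0.
    apply is_lim_seq_unique in H0, Hp0. unfold lyap_rate_sol in H0.
    rewrite H0 in Hp0. injection Hp0. auto. }
  apply lyap_rate_eq0 in Hrate0; [|assumption..]. injection Hrate0 as -> -> -> ->.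
  exists (fun n => s (phi n)). split; [intros n; apply Hs0|].
  rewrite <- lyap_at_equilibrium. apply is_lim_seq_lyap; assumption.
Qed.

Lemma lyap_sol_vanishes (eta : R) : 0 < eta -> exists T, forall t, T <= t -> lyap_sol t < eta.
Proof.
  intros Heta. destruct lyap_sol_vanishing_seq as [s [Hs0 Hs]].
  apply is_lim_seq_spec in Hs. destruct (Hs (mkposreal eta Heta)) as [N HN].
  exists (s N). intros t Ht. specialize (HN N (Nat.le_refl N)). simpl in HN.
  pose proof (lyap_sol_antitone (s N) t (conj (Hs0 N) Ht)).
  pose proof (Rle_abs (lyap_sol (s N) - 0)). lra.
Qed.

Lemma tendsto_equilibrium :
  filterlim S (Rbar_locally p_infty) (locally Ss) /\
  filterlim V (Rbar_locally p_infty) (locally Vs) /\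
  filterlim I1 (Rbar_locally p_infty) (locally I1s) /\
  filterlim I2 (Rbar_locally p_infty) (locally I2s).
Proof.
  assert (Hev : forall eps : posreal, Rbar_locally p_infty (fun t =>
    Rabs (S t - Ss) < eps /\ Rabs (V t - Vs) < eps /\
    Rabs (I1 t - I1s) < eps /\ Rabs (I2 t - I2s) < eps)).
  { intros eps.
    destruct (filter_ex (F := at_right 0) _ (near_of_lyap_small eps (cond_pos eps)))
      as [eta [Heta Hnear]].
    destruct (lyap_sol_vanishes eta Heta) as [T HT].
    exists (Rmax T 0). intros t Ht. pose proof (Rmax_l T 0). pose proof (Rmax_r T 0).
    destruct (positive_forever t ltac:(lra)) as (pS & pV & pI1 & pI2).
    apply Hnear; try assumption. apply HT. lra. }
  repeat split; apply filterlim_locally; intros eps; generalize (Hev eps);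
    apply filter_imp; intros t Ht; rewrite ball_Rabs; tauto.
Qed.

End Solution.

Lemma lyapunov_stable : forall eps, 0 < eps -> exists delta, 0 < delta /\
  forall S V I1 I2 : R -> R,
    is_solution Lam mu r k gam1 gam2 v1 v2 F1 F2 S V I1 I2 ->
    0 < S 0 -> 0 < V 0 -> 0 < I1 0 -> 0 < I2 0 ->
    dist4 (S 0) (V 0) (I1 0) (I2 0) Ss Vs I1s I2s < delta ->
    forall t, 0 <= t -> dist4 (S t) (V t) (I1 t) (I2 t) Ss Vs I1s I2s < eps.
Proof.
  intros eps Heps.
  destruct (filter_ex (F := at_right 0) _ (near_of_lyap_small (eps / 2) ltac:(lra)))
    as [eta [Heta Hnear]].
  destruct (filter_ex (F := at_right 0) _ (lyap_small_near eta Heta)) as [delta [Hdelta Hsmall]].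
  exists delta. split; [exact Hdelta|].
  intros S V I1 I2 Hsol HS0 HV0 HI10 HI20 Hdist t Ht.
  destruct (Rabs_sub_le_dist4 (S 0) (V 0) (I1 0) (I2 0) Ss Vs I1s I2s) as (DS & DV & DI1 & DI2).
  pose proof (Hsmall (S 0) (V 0) (I1 0) (I2 0) ltac:(lra) ltac:(lra) ltac:(lra) ltac:(lra)) as H0.
  pose proof (lyap_sol_antitone S V I1 I2 Hsol HS0 HV0 HI10 HI20 0 t ltac:(lra)) as Hanti.
  destruct (positive_forever S V I1 I2 Hsol HS0 HV0 HI10 HI20 t Ht) as (pS & pV & pI1 & pI2).
  unfold lyap_sol in Hanti.
  destruct (Hnear (S t) (V t) (I1 t) (I2 t) pS pV pI1 pI2 ltac:(lra)) as (CS & CV & CI1 & CI2).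
  apply dist4_lt_of_Rabs_sub_lt; assumption.
Qed.

Lemma globally_asymptotically_stable : GAS Lam mu r k gam1 gam2 v1 v2 F1 F2 Ss Vs I1s I2s.
Proof.
  split; [exact lyapunov_stable|]. intros S V I1 I2 Hsol HS0 HV0 HI10 HI20.
  apply (tendsto_equilibrium S V I1 I2); assumption.
Qed.

End Model.

Theorem mainTheorem16
  (Lam mu r k gam1 gam2 v1 v2 : R) (F1 F2 f1 f2 g1 g2 : R -> R -> R)
  (Ss Vs I1s I2s : R) :
  0 < Lam -> 0 < mu -> 0 < r -> 0 < k -> 0 < gam1 -> 0 < gam2 ->
  0 <= v1 -> 0 <= v2 ->
  incidence_hyp F1 f1 g1 -> incidence_hyp F2 f2 g2 ->
  0 < Ss -> 0 < Vs -> 0 < I1s -> 0 < I2s ->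
  is_equilibrium Lam mu r k gam1 gam2 v1 v2 F1 F2 Ss Vs I1s I2s ->
  (forall S V1 I1 I2 : R,
     0 < S -> 0 < V1 -> 0 < I1 -> 0 < I2 ->
     (S, V1, I1, I2) <> (Ss, Vs, I1s, I2s) ->
     F1 Ss I1s * (2 - Ss / S - S * g1 S I1 / (Ss * g1 Ss I1s))
     + F2 Ss I2s * (2 - Ss / S - S * g2 S I2 / (Ss * g2 Ss I2s))
     + r * Ss * (3 - Ss / S - V1 / Vs - S * Vs / (Ss * V1))
     + mu * Ss * (2 - Ss / S - S / Ss)
     + I1 * (Ss * g1 S I1 - (gam1 + v1 + mu))
     + I2 * (Ss * g2 S I2 + k * Vs - (gam2 + v2 + mu)) < 0) ->
  GAS Lam mu r k gam1 gam2 v1 v2 F1 F2 Ss Vs I1s I2s.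
Proof.
  intros _ _ _ _ _ _ _ _ HF1 HF2 HSs HVs HI1s HI2s Heq Hdecay.
  exact (globally_asymptotically_stable Lam mu r k gam1 gam2 v1 v2 F1 F2 f1 f2 g1 g2
    Ss Vs I1s I2s HF1 HF2 HSs HVs HI1s HI2s Heq Hdecay).
Qed.
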